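(* Let $S$ be a finite set, $R$ a commutative ring with $1$, $q\in R$, and $\mathfrak M\subseteq 2^S$ an arbitrary set system. Then the ideal $I_q(\mathfrak M)$ of $A=R\langle t_s\mid s\in S\rangle$, and hence the algebra $D_q(\mathfrak M)=A/I_q(\mathfrak M)$, does not depend on the choice of the total order on $S$ used to define it.
   Context: Given a total order $<$ on $S$: for $J=\{j_1<\dots<j_{\#J}\}\subseteq S$, $t_J=t_{j_1}\cdots t_{j_{\#J}}$; for $I=\{j_{\alpha_1}<\dots<j_{\alpha_{\#I}}\}\subseteq J$, $\ell_J(I)=\sum_{\nu}(\alpha_\nu-\nu)$; $\tau^-_J=\sum_{I\subseteq J,\ \#I\text{ odd}}(-1)^{\ell_J(I)}(-q)^{(\#I-1)/2}t_{J\setminus I}$. $I_q(\mathfrak M)$ is the two-sided ideal of $A$ generated by $t_s^2-q$ ($s\in S$), $t_rt_s+t_st_r-2q$ ($r,s\in S$, $s<r$), and $\tau^-_J$ ($J\in\mathfrak M$); all of $t_J$, $\ell_J$, $\tau^-_J$ depend on the order. *)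

From mathcomp Require Import all_boot all_order all_algebra.
Set Implicit Arguments. Unset Strict Implicit. Unset Printing Implicit Defensive.
Import Order.TTheory GRing.Theory.
Local Open Scope ring_scope.

(* The free associative algebra A = R<t_s | s in S> (S finite) is modelled as
   the set of functions  f : seq S -> R  (coefficient of each word) of bounded
   support length (= finite support, since S is finite).  Word w = [:: s1;..;sk]
   stands for the monomial t_{s1} ... t_{sk}. *)

Section FreeAlg.
Variables (S : finType) (R : comPzRingType).

Definition ncpoly := seq S -> R.

Definition is_ncpoly (f : ncpoly) : Prop :=
  exists n : nat, forall w : seq S, (n <= size w)%N -> f w = 0.

Definition nc_const (c : R) : ncpoly := fun w => if w == [::] then c else 0.
Definition nc_mono (u : seq S) : ncpoly := fun w => (w == u)%:R.
Definition nc_add (f g : ncpoly) : ncpoly := fun w => f w + g w.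
Definition nc_opp (f : ncpoly) : ncpoly := fun w => - f w.
Definition nc_scale (c : R) (f : ncpoly) : ncpoly := fun w => c * f w.
Definition nc_mul (f g : ncpoly) : ncpoly :=
  fun w => \sum_(i < (size w).+1) f (take i w) * g (drop i w).
Definition nc_sum (I : finType) (P : pred I) (F : I -> ncpoly) : ncpoly :=
  fun w => \sum_(i | P i) F i w.

Inductive in_ideal (G : ncpoly -> Prop) : ncpoly -> Prop :=
| ideal_gen f : G f -> in_ideal G f
| ideal_zero : in_ideal G (nc_const 0)
| ideal_add f g : in_ideal G f -> in_ideal G g -> in_ideal G (nc_add f g)
| ideal_lmul a f : is_ncpoly a -> in_ideal G f -> in_ideal G (nc_mul a f)
| ideal_rmul f a : is_ncpoly a -> in_ideal G f -> in_ideal G (nc_mul f a).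

Definition total_order (le : rel S) : Prop :=
  [/\ forall x y, le x y || le y x,
      forall x y, le x y -> le y x -> x = y &
      forall x y z, le x y -> le y z -> le x z].

Definition lt_of (le : rel S) : rel S := fun x y => (x != y) && le x y.

Definition sorted_set (le : rel S) (J : {set S}) : seq S := sort le (enum J).

Definition tJ (le : rel S) (J : {set S}) : ncpoly := nc_mono (sorted_set le J).

(* l_J(I) = sum_nu (alpha_nu - nu), where I = {j_{alpha_1} < ... < j_{alpha_#I}}
   (for i = j_{alpha_nu}: alpha_nu - 1 = index of i in sorted J and
   nu - 1 = index of i in sorted I). *)
Definition ellJ (le : rel S) (J I : {set S}) : nat :=
  let sJ := sorted_set le J in
  let sI := sorted_set le I in
  (\sum_(i <- sI) (index i sJ - index i sI))%N.

Definition tau_minus (q : R) (le : rel S) (J : {set S}) : ncpoly :=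
  nc_sum (fun I : {set S} => (I \subset J) && odd #|I|)
    (fun I => nc_scale ((-1) ^+ ellJ le J I * (- q) ^+ ((#|I| - 1) %/ 2))
                       (tJ le (J :\: I))).

Definition Iq_gens (q : R) (M : {set {set S}}) (le : rel S) (f : ncpoly) : Prop :=
  (exists s : S, f = nc_add (nc_mono [:: s; s]) (nc_opp (nc_const q)))
  \/ (exists r s : S, lt_of le s r /\
        f = nc_add (nc_add (nc_mono [:: r; s]) (nc_mono [:: s; r]))
                   (nc_opp (nc_const (2%:R * q))))
  \/ (exists J : {set S}, J \in M /\ f = tau_minus q le J).

Definition Iq (q : R) (M : {set {set S}}) (le : rel S) (f : ncpoly) : Prop :=
  in_ideal (Iq_gens q M le) f.

End FreeAlg.

From mathcomp Require Import all_boot all_order all_algebra.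
From Stdlib Require Import FunctionalExtensionality.
From mathcomp Require Import ring.
Set Implicit Arguments. Unset Strict Implicit. Unset Printing Implicit Defensive.
Import Order.TTheory GRing.Theory.
Local Open Scope ring_scope.

(* For a word w = x_1 ... x_k put (E_w, O_w)^T = M_{x_1} ... M_{x_k} (1, 0)^T with
   M_x = [[t_x, -q], [1, -t_x]] over A.  Since
   M_x M_y + M_y M_x = (t_x t_y + t_y t_x - 2q) Id,
   swapping two adjacent letters only changes the sign of (E_w, O_w) modulo the
   ideal Q of the quadratic relations, which does not depend on the order; hence
   O_w and O_w' agree up to sign modulo Q whenever w' is a permutation of w.
   Expanding the product shows that O_w = tau^-_J when w lists J increasingly,
   so every generator tau^-_J for one order is, modulo Q, a signed generator for
   any other order. *)

Section FreeAlgebra.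
Variables (S : finType) (R : comPzRingType).
Implicit Types (f g h : ncpoly S R) (w u : seq S) (x : S).

Definition lmul_t x f : ncpoly S R :=
  fun w => if w is a :: w' then (a == x)%:R * f w' else 0.

Lemma lmul_tB x f g w : lmul_t x (fun v => f v - g v) w = lmul_t x f w - lmul_t x g w.
Proof. by case: w => [|a w] /=; rewrite ?subr0 // mulrBr. Qed.

Lemma lmul_tZ x c f w : lmul_t x (fun v => c * f v) w = c * lmul_t x f w.
Proof. by case: w => [|a w] /=; rewrite ?mulr0 // mulrCA. Qed.

Lemma lmul_t_sum x (I : finType) (P : pred I) (c : I -> R) (F : I -> ncpoly S R) w :
  lmul_t x (fun v => \sum_(i | P i) c i * F i v) w = \sum_(i | P i) c i * lmul_t x (F i) w.
Proof.
case: w => [|a w] /=; first by rewrite big1 // => i _; rewrite mulr0.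
by rewrite mulr_sumr; apply: eq_bigr => i _; rewrite mulrCA.
Qed.

Lemma nc_mono_cons x u w : nc_mono R (x :: u) w = lmul_t x (nc_mono R u) w.
Proof. by case: w => [|a w] //=; rewrite /nc_mono eqseq_cons -mulnb natrM. Qed.

Lemma nc_mul_constl c f : nc_mul (nc_const c) f = nc_scale c f.
Proof.
apply: functional_extensionality => w; rewrite /nc_mul /nc_scale /nc_const.
rewrite big_ord_recl /= take0 drop0 eqxx big1 ?addr0 // => i _.
by case: w i => [|a w] [i Hi] //=; rewrite mul0r.
Qed.

Lemma nc_mul_mono_nil f : nc_mul (nc_mono R [::]) f = f.
Proof.
apply: functional_extensionality => w; rewrite /nc_mul /nc_mono.
rewrite big_ord_recl /= take0 drop0 eqxx mul1r big1 ?addr0 // => i _.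
by case: w i => [|a w] [i Hi] //=; rewrite mul0r.
Qed.

Lemma nc_mul_mono_cons x u f :
  nc_mul (nc_mono R (x :: u)) f = lmul_t x (nc_mul (nc_mono R u) f).
Proof.
apply: functional_extensionality => w; rewrite /nc_mul /nc_mono /lmul_t.
case: w => [|a w] /=; first by rewrite big_ord_recl big_ord0 /= mul0r addr0.
rewrite big_ord_recl /= mul0r add0r mulr_sumr; apply: eq_bigr => i _.
by rewrite /bump /= add0n eqseq_cons -mulnb natrM mulrA.
Qed.

Lemma nc_mul_t x f : nc_mul (nc_mono R [:: x]) f = lmul_t x f.
Proof. by rewrite nc_mul_mono_cons nc_mul_mono_nil. Qed.

Lemma nc_mul_addl f g h : nc_mul (nc_add f g) h = nc_add (nc_mul f h) (nc_mul g h).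
Proof.
apply: functional_extensionality => w; rewrite /nc_mul /nc_add -big_split /=.
by apply: eq_bigr => i _; rewrite mulrDl.
Qed.

Lemma nc_mul_oppl f h : nc_mul (nc_opp f) h = nc_opp (nc_mul f h).
Proof.
apply: functional_extensionality => w; rewrite /nc_mul /nc_opp -sumrN /=.
by apply: eq_bigr => i _; rewrite mulNr.
Qed.

Lemma is_ncpoly_const c : is_ncpoly (nc_const (S:=S) (R:=R) c).
Proof. by exists 1%N => -[|a w]. Qed.

Lemma is_ncpoly_mono u : is_ncpoly (nc_mono R u).
Proof. by exists (size u).+1 => w; rewrite /nc_mono; case: eqP => // ->; rewrite ltnn. Qed.

Lemma is_ncpoly_lmul_t x f : is_ncpoly f -> is_ncpoly (lmul_t x f).
Proof. by move=> [n Hn]; exists n.+1 => -[|a w] //= Hw; rewrite Hn ?mulr0. Qed.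

Lemma is_ncpoly_lin f g h a b : is_ncpoly f -> is_ncpoly g ->
  (forall w, h w = a * f w + b * g w) -> is_ncpoly h.
Proof.
move=> [n Hn] [m Hm] Eh; exists (n + m)%N => w Hw.
by rewrite Eh Hn ?Hm ?mulr0 ?addr0 // (leq_trans _ Hw) // ?leq_addl ?leq_addr.
Qed.

Section Ideal.
Variable G : ncpoly S R -> Prop.

Lemma ideal_eq f g : in_ideal G f -> f =1 g -> in_ideal G g.
Proof. by move=> H /functional_extensionality <-. Qed.

Lemma ideal_scale c f : in_ideal G f -> in_ideal G (nc_scale c f).
Proof. by rewrite -nc_mul_constl; apply: ideal_lmul; apply: is_ncpoly_const. Qed.

Lemma ideal_lmul_t x f : in_ideal G f -> in_ideal G (lmul_t x f).
Proof. by rewrite -nc_mul_t; apply: ideal_lmul; apply: is_ncpoly_mono. Qed.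

Lemma ideal_zero_fun : in_ideal G (fun _ => 0).
Proof. by apply: ideal_eq (ideal_zero G) _ => w; rewrite /nc_const if_same. Qed.

Lemma in_ideal_sub (G' : ncpoly S R -> Prop) f :
  (forall g, G g -> in_ideal G' g) -> in_ideal G f -> in_ideal G' f.
Proof.
move=> HG; elim=> {f} [f /HG //|||a f Ha _ IH|f a Ha _ IH].
- exact: ideal_zero.
- by move=> f g _ Hf _ Hg; apply: ideal_add.
- exact: ideal_lmul.
- exact: ideal_rmul.
Qed.
End Ideal.

Variable q : R.

(* [tau_pair w] is (E_w, O_w). *)
Fixpoint tau_pair w : ncpoly S R * ncpoly S R :=
  if w is x :: w' then
    ((fun v => lmul_t x (tau_pair w').1 v - q * (tau_pair w').2 v),
     (fun v => (tau_pair w').1 v - lmul_t x (tau_pair w').2 v))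
  else (nc_const 1, nc_const 0).

Lemma is_ncpoly_tau_pair w : is_ncpoly (tau_pair w).1 /\ is_ncpoly (tau_pair w).2.
Proof.
elim: w => [|x w [H1 H2]] /=; first by split; apply: is_ncpoly_const.
have L1 := is_ncpoly_lmul_t x H1; have L2 := is_ncpoly_lmul_t x H2.
by split; [apply: (is_ncpoly_lin (a:=1) (b:=- q) L1 H2)
           |apply: (is_ncpoly_lin (a:=1) (b:=-1) H1 L2)]
  => v; rewrite !mulNr !mul1r.
Qed.

(* Order-free form of the quadratic generators of I_q(M). *)
Definition quad_rels f : Prop :=
  (exists s, f = nc_add (nc_mono R [:: s; s]) (nc_opp (nc_const q)))
  \/ (exists r s, r != s /\
        f = nc_add (nc_add (nc_mono R [:: r; s]) (nc_mono R [:: s; r]))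
                   (nc_opp (nc_const (2%:R * q)))).

Definition anticomm x y : ncpoly S R :=
  nc_add (nc_add (nc_mono R [:: x; y]) (nc_mono R [:: y; x]))
         (nc_opp (nc_const (2%:R * q))).

Lemma anticomm_in_ideal x y : in_ideal quad_rels (anticomm x y).
Proof.
case: (eqVneq x y) => [<-|nxy]; last by apply: ideal_gen; right; exists x, y.
have Hx : in_ideal quad_rels (nc_add (nc_mono R [:: x; x]) (nc_opp (nc_const q))).
  by apply: ideal_gen; left; exists x.
apply: (ideal_eq (ideal_add Hx Hx)) => w.
rewrite /anticomm /nc_add /nc_opp /nc_const; case: ifP => _; last by rewrite !subr0.
by rewrite mulr_natl mulr2n; ring.
Qed.

Lemma anticomm_mulE x y f v :
  nc_mul (anticomm x y) f v =
  lmul_t x (lmul_t y f) v + lmul_t y (lmul_t x f) v - 2%:R * q * f v.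
Proof.
rewrite /anticomm !nc_mul_addl nc_mul_oppl nc_mul_constl !nc_mul_mono_cons.
by rewrite !nc_mul_mono_nil.
Qed.

Lemma tau_pair_swap x y w v :
  (tau_pair [:: x, y & w]).1 v + (tau_pair [:: y, x & w]).1 v
    = nc_mul (anticomm x y) (tau_pair w).1 v /\
  (tau_pair [:: x, y & w]).2 v + (tau_pair [:: y, x & w]).2 v
    = nc_mul (anticomm x y) (tau_pair w).2 v.
Proof.
rewrite !anticomm_mulE /= !lmul_tB !lmul_tZ mulr_natl mulr2n.
by split; ring.
Qed.

Definition sign_equiv w1 w2 (b : bool) :=
  in_ideal quad_rels (fun v => (tau_pair w1).1 v - (-1) ^+ b * (tau_pair w2).1 v) /\
  in_ideal quad_rels (fun v => (tau_pair w1).2 v - (-1) ^+ b * (tau_pair w2).2 v).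

Lemma sign_equiv_refl w : sign_equiv w w false.
Proof. by split; apply: ideal_eq (ideal_zero_fun _) _ => v; rewrite mul1r subrr. Qed.

Lemma sign_equiv_cons x w1 w2 b : sign_equiv w1 w2 b -> sign_equiv (x :: w1) (x :: w2) b.
Proof.
move=> [H1 H2]; split.
  apply: (ideal_eq (ideal_add (ideal_lmul_t x H1) (ideal_scale (- q) H2))) => v.
  by rewrite /nc_add /nc_scale /= lmul_tB lmul_tZ; ring.
apply: (ideal_eq (ideal_add H1 (ideal_scale (-1) (ideal_lmul_t x H2)))) => v.
by rewrite /nc_add /nc_scale /= lmul_tB lmul_tZ; ring.
Qed.

Lemma sign_equiv_trans w1 w2 w3 b c :
  sign_equiv w1 w2 b -> sign_equiv w2 w3 c -> sign_equiv w1 w3 (b (+) c).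
Proof.
rewrite /sign_equiv signr_addb => -[H1 H2] [K1 K2].
split; [apply: (ideal_eq (ideal_add H1 (ideal_scale ((-1) ^+ b) K1)))
       |apply: (ideal_eq (ideal_add H2 (ideal_scale ((-1) ^+ b) K2)))];
  by move=> v; rewrite /nc_add /nc_scale; ring.
Qed.

Lemma sign_equiv_swap x y w : sign_equiv [:: x, y & w] [:: y, x & w] true.
Proof.
have [E O] := is_ncpoly_tau_pair w.
split; [apply: (ideal_eq (ideal_rmul E (anticomm_in_ideal x y)))
       |apply: (ideal_eq (ideal_rmul O (anticomm_in_ideal x y)))];
  by move=> v; have [E1 E2] := tau_pair_swap x y w v; rewrite -?E1 -?E2 mulN1r opprK.
Qed.

Lemma sign_equiv_move x u w : exists b, sign_equiv (x :: u ++ w) (u ++ x :: w) b.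
Proof.
elim: u => [|y u [b IH]] /=; first by exists false; apply: sign_equiv_refl.
exists (true (+) b).
exact: sign_equiv_trans (sign_equiv_swap _ _ _) (sign_equiv_cons _ IH).
Qed.

Lemma sign_equiv_perm w1 w2 : perm_eq w1 w2 -> exists b, sign_equiv w1 w2 b.
Proof.
elim: w1 w2 => [|x w1 IH] w2.
  by rewrite perm_sym => /perm_nilP ->; exists false; apply: sign_equiv_refl.
move=> Hp; have /splitPr Hx : x \in w2 by rewrite -(perm_mem Hp) mem_head.
case: Hx Hp => u w Hp.
have Hp' : perm_eq w1 (u ++ w).
  by rewrite -(perm_cons x) (perm_trans Hp) // -cat1s perm_catCA.
have [b Hb] := IH _ Hp'; have [b' Hb'] := sign_equiv_move x u w.
by exists (b (+) b'); apply: sign_equiv_trans (sign_equiv_cons x Hb) Hb'.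
Qed.

Implicit Types (s : seq S) (I X : {set S}).

(* [ell_seq s I] and [tau_coef s I] are l_J(I) and the coefficient of t_{J\I} in
   tau^-_J when s lists J in increasing order.  For odd #|I|, #|I| %/ 2 = (#|I| - 1) %/ 2;
   [tau_word false s] is the analogous sum over the subsets of even size. *)
Definition ell_seq s I : nat :=
  (\sum_(i <- [seq y <- s | y \in I]) (index i s - index i [seq y <- s | y \in I]))%N.

Definition tau_coef s I : R := (-1) ^+ ell_seq s I * (- q) ^+ (#|I| %/ 2).

Definition tau_word (b : bool) s : ncpoly S R :=
  fun w => \sum_(I : {set S} | (I \subset [set:: s]) && (odd #|I| == b))
             tau_coef s I * nc_mono R [seq y <- s | y \notin I] w.

Lemma index_filter_le (p : pred S) s i :
  p i -> (index i [seq y <- s | p y] <= index i s)%N.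
Proof.
move=> pi; elim: s => [|y s IH] //=.
case: ifP => py /=; first by case: eqP.
by case: eqP => [E|_]; [move: pi; rewrite -E py | exact: leqW].
Qed.

Lemma big_subset_setU1 x X (P : pred {set S}) (F : {set S} -> R) : x \notin X ->
  \sum_(I : {set S} | (I \subset x |: X) && P I) F I =
  \sum_(I : {set S} | (I \subset X) && P I) F I
  + \sum_(I : {set S} | (I \subset X) && P (x |: I)) F (x |: I).
Proof.
move=> xX; rewrite (bigID (fun I : {set S} => x \in I)) /= addrC; congr (_ + _).
  apply: eq_bigl => I; rewrite -{2}(setU1K xX) subsetD1.
  by case: (I \subset x |: X); case: (P I); case: (x \in I).
rewrite (reindex_onto (fun I : {set S} => x |: I) (fun I => I :\ x)); last first.
  by move=> I /andP[_ xI]; rewrite setD1K.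
apply: eq_bigl => I; rewrite setU11 andbT.
have [xI|xI] := boolP (x \in I).
  have -> : (I \subset X) = false.
    by apply/negP => /subsetP/(_ x xI); rewrite (negbTE xX).
  have -> : ((x |: I) :\ x == I) = false.
    by apply/negbTE/eqP => E; move: xI; rewrite -E !inE eqxx.
  by rewrite andbF.
rewrite (setU1K xI) eqxx andbT subUset sub1set setU11 /= -{2}(setU1K xX) subsetD1.
by rewrite xI andbT.
Qed.

Lemma notin_subset x s I : x \notin s -> I \subset [set:: s] -> x \notin I.
Proof. by move=> xs /subsetP sI; apply: contra xs => /sI; rewrite inE. Qed.

Lemma ell_seq_cons x s I : uniq (x :: s) -> I \subset [set:: s] ->
  ell_seq (x :: s) I = (#|I| + ell_seq s I)%N.
Proof.
move=> /andP[xs us] sI; rewrite /ell_seq /= (negbTE (notin_subset xs sI)).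
set f := [seq y <- s | y \in I].
have -> : #|I| = size f.
  rewrite -(card_uniqP (filter_uniq _ us)); apply: eq_card => y.
  rewrite mem_filter andb_idr // => yI.
  by have := subsetP sI y yI; rewrite inE.
rewrite -sum1_size -big_split /=; apply: eq_big_seq => i.
rewrite mem_filter => /andP[iI iS].
have -> : (x == i) = false by apply/negbTE; apply: contraNneq xs => ->.
by rewrite subSn // index_filter_le.
Qed.

Lemma ell_seq_cons_setU1 x s I : uniq (x :: s) ->
  ell_seq (x :: s) (x |: I) = ell_seq s I.
Proof.
move=> /andP[xs us].
have Ef : [seq y <- s | y \in x |: I] = [seq y <- s | y \in I].
  apply: eq_in_filter => y ys; rewrite in_setU1.
  by have -> : (y == x) = false by apply/negbTE; apply: contraNneq xs => <-.
rewrite /ell_seq /= setU11 Ef big_cons /= eqxx subnn add0n.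
apply: eq_big_seq => i; rewrite mem_filter => /andP[iI iS].
have -> : (x == i) = false by apply/negbTE; apply: contraNneq xs => ->.
by rewrite subSS.
Qed.

Lemma tau_coef_cons x s I : uniq (x :: s) -> I \subset [set:: s] ->
  tau_coef (x :: s) I = (-1) ^+ (odd #|I|) * tau_coef s I.
Proof. by move=> us sI; rewrite /tau_coef ell_seq_cons // exprD signr_odd mulrA. Qed.

Lemma tau_coef_cons_setU1 x s I : uniq (x :: s) -> I \subset [set:: s] ->
  tau_coef (x :: s) (x |: I) = (- q) ^+ (odd #|I|) * tau_coef s I.
Proof.
move=> us sI; have xI := notin_subset (proj1 (andP us)) sI.
rewrite /tau_coef ell_seq_cons_setU1 // cardsU1 xI add1n !divn2 /= uphalf_half.
by rewrite exprD mulrCA.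
Qed.

(* Splitting tau_word along whether x lies in I gives back the recursion of tau_pair. *)
Lemma tau_word_cons b x s w : uniq (x :: s) ->
  tau_word b (x :: s) w =
  (-1) ^+ b * lmul_t x (tau_word b s) w + (- q) ^+ (~~ b) * tau_word (~~ b) s w.
Proof.
move=> us; have [xs _] := andP us.
have xX : x \notin [set:: s] by rewrite inE.
rewrite /tau_word set_cons big_subset_setU1 // lmul_t_sum !mulr_sumr; congr (_ + _).
  apply: eq_bigr => I /andP[sI /eqP oddI].
  rewrite /= (negbTE (notin_subset xs sI)) nc_mono_cons tau_coef_cons // oddI.
  by rewrite [RHS]mulrA.
apply: eq_big => [I|I /andP[sI /eqP oddI]].
  rewrite cardsU1; case sI: (I \subset [set:: s]) => //=.
  by rewrite (notin_subset xs sI) /=; case: b; case: (odd _).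
have filtE : [seq y <- x :: s | y \notin x |: I] = [seq y <- s | y \notin I].
  rewrite /= setU11 /=; apply: eq_in_filter => y ys; rewrite in_setU1.
  by have -> : (y == x) = false by apply/negbTE; apply: contraNneq xs => <-.
have oddI' : odd #|I| = ~~ b.
  by rewrite -oddI cardsU1 (notin_subset xs sI) /= negbK.
by rewrite filtE tau_coef_cons_setU1 // oddI' [RHS]mulrA.
Qed.

Lemma tau_pair_word s : uniq s -> tau_pair s = (tau_word false s, tau_word true s).
Proof.
elim: s => [_|x s IH us].
  congr (_, _); apply: functional_extensionality => w; rewrite /tau_word set_nil.
    rewrite (big_pred1 set0); last first.
      by move=> I; rewrite subset0 /=; case: eqP => [->|]; rewrite ?cards0.
    rewrite /tau_coef /ell_seq big_nil cards0 !mul1r /nc_mono /nc_const.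
    by case: (w == [::]).
  rewrite big_pred0 /nc_const ?if_same // => I.
  by rewrite subset0; case: eqP => [->|]; rewrite ?cards0.
have [_ /IH /= ->] := andP us.
by congr (_, _); apply: functional_extensionality => w;
  rewrite tau_word_cons //= ?mulN1r ?expr0 ?mul1r ?expr1; ring.
Qed.

Section Order.
Variable le : rel S.
Hypothesis le_order : total_order le.

Lemma sorted_set_filter (J A : {set S}) (p : pred S) :
  (forall y, (y \in A) = p y && (y \in J)) ->
  sorted_set le A = [seq y <- sorted_set le J | p y].
Proof.
have [le_total le_anti le_trans] := le_order.
have le_tr : transitive le by move=> y x z; apply: le_trans.
have le_as : antisymmetric le by move=> x y /andP[]; apply: le_anti.
move=> HA; apply: (sorted_eq le_tr le_as).
- exact: (sort_sorted le_total).
- exact: (sorted_filter le_tr _ (sort_sorted le_total _)).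
apply: uniq_perm; rewrite ?filter_uniq ?sort_uniq ?enum_uniq // => y.
by rewrite mem_filter !mem_sort !mem_enum HA.
Qed.

Lemma tau_minus_pair (J : {set S}) : tau_minus q le J = (tau_pair (sorted_set le J)).2.
Proof.
have us : uniq (sorted_set le J) by rewrite sort_uniq enum_uniq.
have setJ : [set:: sorted_set le J] = J.
  by apply/setP => y; rewrite inE mem_sort mem_enum.
rewrite tau_pair_word //=; apply: functional_extensionality => w.
rewrite /tau_minus /tau_word /nc_sum setJ; apply: eq_big => [I|I /andP[sI oddI]].
  by rewrite eqb_id.
have sortI : sorted_set le I = [seq y <- sorted_set le J | y \in I].
  by apply: sorted_set_filter => y; rewrite andb_idr // => /(subsetP sI).
have sortJI : sorted_set le (J :\: I) = [seq y <- sorted_set le J | y \notin I].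
  by apply: sorted_set_filter => y; rewrite inE.
rewrite /nc_scale /tJ sortJI /tau_coef /ellJ /ell_seq sortI.
move: oddI; case: #|I| => // n /= evn.
by rewrite subSS subn0 !divn2 /= uphalf_half (negbTE evn).
Qed.

Lemma quad_rels_gens M f : quad_rels f -> Iq_gens q M le f.
Proof.
have [le_total _ _] := le_order.
case=> [|[r [s [rs ->]]]]; first by left.
right; left; case/orP: (le_total s r) => [sr|rs'].
  by exists r, s; rewrite /lt_of eq_sym rs.
exists s, r; split; first by rewrite /lt_of rs.
by apply: functional_extensionality => w; rewrite /nc_add [_ + nc_mono _ _ w]addrC.
Qed.
End Order.

Lemma Iq_subset M le1 le2 f : total_order le1 -> total_order le2 ->
  Iq q M le1 f -> Iq q M le2 f.
Proof.
move=> le1_order le2_order; apply: in_ideal_sub => g.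
have quad_in g' : quad_rels g' -> in_ideal (Iq_gens q M le2) g'.
  by move=> /(quad_rels_gens le2_order M); apply: ideal_gen.
case=> [Hg|[[r [s [/andP[sr _] ->]]]|[J [JM ->]]]].
- by apply: quad_in; left.
- by apply: quad_in; right; exists r, s; rewrite eq_sym.
have tau2 : in_ideal (Iq_gens q M le2) (tau_minus q le2 J).
  by apply: ideal_gen; right; right; exists J.
have perm12 : perm_eq (sorted_set le1 J) (sorted_set le2 J).
  by rewrite perm_sort perm_sym perm_sort.
have [b [_ /(in_ideal_sub quad_in) diff]] := sign_equiv_perm perm12.
apply: (ideal_eq (ideal_add diff (ideal_scale ((-1) ^+ b) tau2))) => v.
by rewrite /nc_add /nc_scale (tau_minus_pair le1_order) (tau_minus_pair le2_order) subrK.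
Qed.
End FreeAlgebra.

Theorem proposition4p1 (S : finType) (R : comPzRingType) (q : R)
    (M : {set {set S}}) (le1 le2 : rel S) :
  total_order le1 -> total_order le2 ->
  forall f : ncpoly S R, Iq q M le1 f <-> Iq q M le2 f.
Proof. by move=> H1 H2 f; split; apply: Iq_subset. Qed.
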